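(* Let $T = T_d(I)$ be a balanced triangular region. The following statements hold. \begin{enumerate} \item Let $\tau$ and $\tau'$ be two lozenge tilings of $T$. Then their perfect matching signs are the same if and only if their lattice path signs are the same, that is, \[ \operatorname{sgn}_{\mathrm{pm}}(\tau) \cdot \operatorname{sgn}_{\mathrm{lp}}(\tau) = \operatorname{sgn}_{\mathrm{pm}}(\tau') \cdot \operatorname{sgn}_{\mathrm{lp}}(\tau'). \] \item In particular, we have that \[ |\det{Z(T)}| = |\det{N(T)}|. \] \end{enumerate}
   Context: Let $R=K[x,y,z]$ and $I\subset R$ a monomial ideal. The triangular region $\mathcal{T}_d$ is an equilateral triangle of side length $d$ subdivided into unit triangles; the downward-pointing unit triangles are labeled by the monomials of degree $d-2$ and the upward-pointing ones by the monomials of degree $d-1$ ($x^{d-1}$ at the top, $y^{d-1}$ bottom-left, $z^{d-1}$ bottom-right, and an upward triangle sharing an edge with a downward triangle has label equal to the downward label times a variable). $T_d(I)$ is obtained from $\mathcal{T}_d$ by removing the triangles whose labels lie in $I$. It is balanced if it has as many upward- as downward-pointing unit triangles. A lozenge is a union of two unit triangles sharing an edge; a lozenge tiling covers every triangle of $T$ by exactly one lozenge. Monomials are ordered by graded reverse-lexicographic order. $Z(T)$ is the bi-adjacency matrix of the bipartite graph whose vertices are the centers $B_1,\dots$ of the downward triangles and $W_1,\dots$ of the upward triangles of $T$ (each ordered by reverse-lex order of labels), with $Z(T)_{(i,j)}=1$ iff the triangles $B_i$ and $W_j$ share an edge. A tiling $\tau$ gives a perfect matching, i.e. a bijection $\pi$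 viewed as a permutation; the perfect matching sign is $\operatorname{sgn}_{\mathrm{pm}}(\tau):=\operatorname{sgn}(\pi)$. $L(T)$ is the set of midpoints of the edges of triangles of $T$ parallel to the upper-left boundary of $\mathcal{T}_d$, viewed as a sub-lattice of $\mathbb{Z}^2$ (steps East or Southeast). $A_1,\dots,A_m$ are the vertices of $L(T)$ lying only on upward-pointing triangles of $T$, and $E_1,\dots,E_m$ those lying only on downward-pointing triangles of $T$, each ordered from smallest to largest in reverse-lex order of the label of the upward triangle whose upper-left edge contains the vertex. $N(T)_{(i,j)}$ is the number of lattice paths in $\mathbb{Z}^2$ from $A_i$ to $E_j$. A tiling $\tau$ determines a family of non-intersecting lattice paths (joining the vertices of $L(T)$ on each lozenge); if the path starting at $A_i$ ends at $E_{\lambda(i)}$, the lattice path sign is $\operatorname{sgn}_{\mathrm{lp}}(\tau):=\operatorname{sgn}(\lambda)$. *)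

From mathcomp Require Import all_boot all_order all_algebra all_fingroup.
Set Implicit Arguments. Unset Strict Implicit. Unset Printing Implicit Defensive.
Import GRing.Theory Num.Theory.

(* A monomial x^a y^b z^c of K[x,y,z] is represented by its exponent triple
   (a, b, c).  Projections: *)
Definition mono := (nat * nat * nat)%type.
Definition ex (m : mono) : nat := m.1.1.
Definition ey (m : mono) : nat := m.1.2.
Definition ez (m : mono) : nat := m.2.
Definition mono0 : mono := (0, 0, 0).

(* A monomial ideal I of K[x,y,z] is determined by the set of monomials it
   contains, which is an arbitrary set of monomials closed under
   multiplication by the variables.  We represent I by that set. *)
Definition monomial_ideal (I : pred mono) : Prop :=
  forall a b c, I (a, b, c) ->
    [&& I (a.+1, b, c), I (a, b.+1, c) & I (a, b, c.+1)].

Definition monos (k : nat) : seq mono :=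
  flatten [seq [seq (a, b, k - a - b) | b <- iota 0 (k - a).+1]
          | a <- iota 0 k.+1].

(* Graded reverse-lexicographic order (x > y > z) on monomials of the same
   degree: m <= m' iff m = m' or the last nonzero entry of m - m' is
   negative, i.e. m has larger z-exponent, or equal z-exponent and larger
   y-exponent. *)
Definition revlex_le (m m' : mono) : bool :=
  (ez m' < ez m) || ((ez m == ez m') && (ey m' <= ey m)).

(* Labels of the downward (degree d-2) and upward (degree d-1) unit
   triangles of T_d(I), i.e. those of the triangle T_d not in I, sorted
   increasingly in reverse-lex order. *)
Definition downs (d : nat) (I : pred mono) : seq mono :=
  if d is k.+2 then sort revlex_le [seq m <- monos k | ~~ I m] else [::].
Definition ups (d : nat) (I : pred mono) : seq mono :=
  if d is k.+1 then sort revlex_le [seq m <- monos k | ~~ I m] else [::].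

Definition B (d : nat) (I : pred mono) (i : nat) : mono := nth mono0 (downs d I) i.
Definition W (d : nat) (I : pred mono) (j : nat) : mono := nth mono0 (ups d I) j.

(* The downward triangle labelled m and the upward triangle labelled u share
   an edge iff u = m*x, m*y or m*z. *)
Definition adj (m u : mono) : bool :=
  [|| u == ((ex m).+1, ey m, ez m), u == (ex m, (ey m).+1, ez m)
    | u == (ex m, ey m, (ez m).+1)].

Definition Zmat (d : nat) (I : pred mono) (n : nat) : 'M[int]_n :=
  \matrix_(i < n, j < n) (adj (B d I i) (W d I j))%:R%R.

(* Lozenge tilings of T correspond exactly to perfect matchings of the
   bipartite graph, i.e. to permutations pi with B_i adjacent to W_(pi i). *)
Definition is_tiling (d : nat) (I : pred mono) (n : nat) (pi : 'S_n) : Prop :=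
  forall i : 'I_n, adj (B d I i) (W d I (pi i)).

Definition psign (m : nat) (s : 'S_m) : int := ((-1) ^+ odd_perm s)%R.

Definition sgn_pm (d : nat) (I : pred mono) (n : nat) (pi : 'S_n) : int :=
  psign pi.

(* Each edge of T_d parallel to the upper-left boundary is the upper-left
   edge of a unique upward triangle of T_d; we label the corresponding
   vertex of L by the label u (degree d-1) of that upward triangle.
   That edge is also the right edge of the downward triangle u/z (if z | u).
   It belongs to T iff one of these two triangles is in T. *)
Definition on_up (I : pred mono) (u : mono) : bool := ~~ I u.
Definition on_down (I : pred mono) (u : mono) : bool :=
  (0 < ez u) && ~~ I (ex u, ey u, (ez u).-1).
Definition is_vert (I : pred mono) (u : mono) : bool := on_up I u || on_down I u.
Definition is_A (I : pred mono) (u : mono) : bool := on_up I u && ~~ on_down I u.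
Definition is_E (I : pred mono) (u : mono) : bool := ~~ on_up I u && on_down I u.

Definition labels (d : nat) : seq mono := if d is k.+1 then monos k else [::].

Definition Avs (d : nat) (I : pred mono) : seq mono :=
  sort revlex_le [seq u <- labels d | is_A I u].
Definition Evs (d : nat) (I : pred mono) : seq mono :=
  sort revlex_le [seq u <- labels d | is_E I u].
Definition Av d I (i : nat) : mono := nth mono0 (Avs d I) i.
Definition Ev d I (j : nat) : mono := nth mono0 (Evs d I) j.

(* The two lattice steps (East and Southeast in Z^2): from the vertex
   labelled u to the one labelled u*z/y or u*z/x. *)
Definition geo_step (u v : mono) : bool :=
  ((0 < ey u) && (v == (ex u, (ey u).-1, (ez u).+1))) ||
  ((0 < ex u) && (v == ((ex u).-1, ey u, (ez u).+1))).

Definition lstep (I : pred mono) : rel mono :=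
  fun u v => [&& is_vert I u, is_vert I v & geo_step u v].

Fixpoint npaths (Wl : seq mono) (step : rel mono) (k : nat) (u v : mono) : nat :=
  match k with
  | 0 => (u == v : nat)
  | k'.+1 => (u == v : nat) + \sum_(w <- Wl) (step u w : nat) * npaths Wl step k' w v
  end.

(* Lattice path matrix N(T): number of lattice paths in L(T) from A_i to E_j
   (each step increases the z-exponent, so paths have at most d steps). *)
Definition Nmat (d : nat) (I : pred mono) : 'M[int]_(size (Avs d I)) :=
  \matrix_(i, j) (npaths (labels d) (lstep I) d (Av d I i) (Ev d I j))%:Z%R.

Definition matched (d : nat) (I : pred mono) (n : nat) (pi : 'S_n)
  (m u : mono) : bool :=
  [exists i : 'I_n, (B d I i == m) && (W d I (pi i) == u)].

(* Step of the path system of a tiling: joining the two vertices of L(T)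
   lying on a lozenge (up u together with down u/y, resp. u/x). *)
Definition tstep (d : nat) (I : pred mono) (n : nat) (pi : 'S_n) : rel mono :=
  fun u v =>
    ((0 < ey u) && matched d I pi (ex u, (ey u).-1, ez u) u
               && (v == (ex u, (ey u).-1, (ez u).+1))) ||
    ((0 < ex u) && matched d I pi ((ex u).-1, ey u, ez u) u
               && (v == ((ex u).-1, ey u, (ez u).+1))).

Definition treach (d : nat) (I : pred mono) (n : nat) (pi : 'S_n) (u v : mono) : bool :=
  0 < npaths (labels d) (tstep d I pi) d u v.

(* lambda: the permutation with the path from A_i ending at E_(lambda i);
   sgn_lp is its sign (0 if no such permutation exists, which does not
   happen for tilings). *)
Definition sgn_lp (d : nat) (I : pred mono) (n : nat) (pi : 'S_n) : int :=
  match [pick s : 'S_(size (Avs d I)) |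
         [forall i : 'I_(size (Avs d I)), treach d I pi (Av d I i) (Ev d I (s i))]] with
  | Some s => psign s
  | None => 0%R
  end.

From mathcomp Require Import all_boot all_order all_algebra all_fingroup.
From mathcomp Require Import zify.
Import GRing.Theory Num.Theory.
Set Implicit Arguments. Unset Strict Implicit. Unset Printing Implicit Defensive.

(* Both determinants are complementary minors of one unimodular matrix.  For
   a relation G on the vertices of L(T) whose steps raise the z-exponent, the
   matrix 1 - G is inverted by the matrix of G-path counts, and it is
   unitriangular in reverse-lex order, so det (1 - G) = +-1 does not depend
   on G.  Index the rows of 1 - G by the E-vertices and then the upward
   triangles, its columns by the A-vertices and then the downward triangles.
   By Jacobi's identity, det (1 - G) times the A-to-E block of path counts is
   the determinant of the block of 1 - G between upward and downward
   triangles.  For the steps of L(T) these blocks are N(T) and, up to signs,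
   Z(T)^T.  For the paths of a tiling tau the path block is the permutation
   matrix of lambda, while the other block becomes triangular once its
   columns are permuted by the matching pi, with a diagonal of signs that
   does not depend on tau.  Hence sgn pi * sgn lambda is the same for all
   tilings. *)

Lemma sum_bool_le1 (T : eqType) (s : seq T) (P : pred T) : uniq s ->
  (forall x y, P x -> P y -> x = y) -> (\sum_(x <- s) P x <= 1)%N.
Proof.
move=> s_uniq P_inj.
have -> : (\sum_(x <- s) P x)%N = count P s.
  by rewrite -sum1_count [RHS]big_mkcond; apply: eq_bigr => x _; case: (P x).
have [/hasP[x xs Px]|/hasPn noP] := boolP (has P s); last first.
  by rewrite (@eq_in_count _ _ pred0) ?count_pred0 // => y /noP /negbTE.
rewrite (@eq_in_count _ _ (pred1 x)) ?count_uniq_mem ?xs //.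
by move=> y _ /=; apply/idP/eqP => [Py|->]; [exact: P_inj|].
Qed.

Lemma perm_eq_nth_perm (T : eqType) N (x0 : T) (s v : seq T) :
  perm_eq s v -> uniq v -> size v = N ->
  exists p : 'S_N, forall i : 'I_N, nth x0 v (p i) = nth x0 s i.
Proof.
move=> sv v_uniq vN.
have sN : size s = N by rewrite (perm_size sv).
have s_in_v (i : 'I_N) : nth x0 s i \in v by rewrite -(perm_mem sv) mem_nth ?sN.
have lt_index (i : 'I_N) : (index (nth x0 s i) v < N)%N.
  by rewrite -[X in (_ < X)%N]vN index_mem.
pose f i := Ordinal (lt_index i).
have nth_f i : nth x0 v (f i) = nth x0 s i by rewrite /= nth_index.
have f_inj : injective f.
  move=> i j /(congr1 (fun k : 'I_N => nth x0 v k)); rewrite /= !nth_f => /eqP.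
  by rewrite nth_uniq ?sN ?(perm_uniq sv) // => /eqP /val_inj.
by exists (perm f_inj) => i; rewrite permE nth_f.
Qed.

Lemma mem_monos k m : (m \in monos k) = (ex m + ey m + ez m == k)%N.
Proof.
case: m => [[a b] c]; rewrite /ex /ey /ez /=.
apply/flatten_mapP/eqP.
- case=> a' ha' /mapP [b' hb' [-> -> ->]]; move: ha' hb'; rewrite !mem_iota; lia.
- move=> h; exists a; first by rewrite mem_iota; lia.
  apply/mapP; exists b; first by rewrite mem_iota; lia.
  congr (_, _, _); lia.
Qed.

Lemma uniq_monos k : uniq (monos k).
Proof.
apply: allpairs_uniq_dep => [||[a b] [a' b'] _ _ /= [-> ->] //]; first exact: iota_uniq.
by move=> x _; exact: iota_uniq.
Qed.

Lemma revlex_le_trans : transitive revlex_le.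
Proof.
move=> y x z; rewrite /revlex_le.
case/orP => [h1|/andP[/eqP h1 h2]]; case/orP => [h3|/andP[/eqP h3 h4]];
  apply/orP; (try by left; lia); right; apply/andP; split; apply/eqP || idtac; lia.
Qed.

Lemma revlex_le_total : total revlex_le.
Proof.
move=> [[a b] c] [[a' b'] c']; rewrite /revlex_le /ex /ey /ez /=.
case: (ltngtP c c') => h; rewrite ?orbT //.
by subst => /=; case: leqP => // /ltnW ->; rewrite orbT.
Qed.

Lemma revlex_le_refl : reflexive revlex_le.
Proof. by move=> x; rewrite /revlex_le eqxx leqnn orbT. Qed.

Lemma revlex_le_ez m m' : revlex_le m m' -> (ez m' <= ez m)%N.
Proof. by case/orP => [/ltnW|/andP[/eqP -> _]]. Qed.

Lemma sorted_revlex_ez s i j : sorted revlex_le s -> (i <= j)%N -> (j < size s)%N ->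
  (ez (nth mono0 s j) <= ez (nth mono0 s i))%N.
Proof.
move=> s_sorted ij js; apply: revlex_le_ez.
apply: (sorted_leq_nth revlex_le_trans revlex_le_refl) => //; rewrite inE //.
exact: leq_ltn_trans js.
Qed.

Definition shiftz (m : mono) : mono := (ex m, ey m, (ez m).+1).

Definition adj_xy (m u : mono) : bool :=
  (u == ((ex m).+1, ey m, ez m)) || (u == (ex m, (ey m).+1, ez m)).

Lemma shiftz_inj : injective shiftz.
Proof. by move=> [[a b] c] [[a' b'] c']; rewrite /shiftz /ex /ey /ez /= => -[-> -> ->]. Qed.

Lemma adj_xy_shiftz m u : adj m u = adj_xy m u || (u == shiftz m).
Proof. by rewrite /adj /adj_xy orbA. Qed.

Lemma adj_xy_ez m u : adj_xy m u -> ez u = ez m.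
Proof. by case/orP => /eqP ->. Qed.

Lemma step_y_shiftz u m :
  (0 < ey u) && (shiftz m == (ex u, (ey u).-1, (ez u).+1)) = (u == (ex m, (ey m).+1, ez m)).
Proof.
case: u m => [[a b] c] [[a' b'] c']; rewrite /shiftz /ex /ey /ez /=.
by apply/andP/eqP => [[b_gt0 /eqP [-> -> ->]]|[-> -> ->]]; rewrite ?prednK.
Qed.

Lemma step_x_shiftz u m :
  (0 < ex u) && (shiftz m == ((ex u).-1, ey u, (ez u).+1)) = (u == ((ex m).+1, ey m, ez m)).
Proof.
case: u m => [[a b] c] [[a' b'] c']; rewrite /shiftz /ex /ey /ez /=.
by apply/andP/eqP => [[a_gt0 /eqP [-> -> ->]]|[-> -> ->]]; rewrite ?prednK.
Qed.

Lemma geo_step_shiftz u m : geo_step u (shiftz m) = adj_xy m u.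
Proof. by rewrite /geo_step step_y_shiftz step_x_shiftz orbC. Qed.

Lemma is_vert_shiftz I m : ~~ I m -> is_vert I (shiftz m).
Proof. by case: m => [[a b] c] /= Im; rewrite /is_vert /on_down Im orbT. Qed.

Lemma lstep_shiftz I u m : ~~ I u -> ~~ I m -> lstep I u (shiftz m) = adj_xy m u.
Proof.
by move=> Iu Im; rewrite /lstep is_vert_shiftz // /is_vert /on_up Iu geo_step_shiftz.
Qed.

Lemma mem_labels d u : (u \in labels d) = (0 < d)%N && (ex u + ey u + ez u == d.-1)%N.
Proof. by case: d => [|k] //=; rewrite mem_monos. Qed.

Lemma uniq_labels d : uniq (labels d).
Proof. by case: d => [|k] //=; exact: uniq_monos. Qed.

Lemma labels_ez d w : w \in labels d -> (ez w < d)%N.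
Proof. by rewrite mem_labels => /andP[d_gt0 /eqP]; lia. Qed.

Lemma mem_ups d I u : (u \in ups d I) = (u \in labels d) && ~~ I u.
Proof. by case: d => [|k] //; rewrite /ups /labels mem_sort mem_filter andbC. Qed.

Lemma uniq_ups d I : uniq (ups d I).
Proof. by case: d => [|k] //; rewrite /ups sort_uniq filter_uniq // uniq_monos. Qed.

Lemma sorted_ups d I : sorted revlex_le (ups d I).
Proof. by case: d => [|k] //; apply: sort_sorted; exact: revlex_le_total. Qed.

Lemma mem_downs d I m :
  (m \in downs d I) = (1 < d)%N && (ex m + ey m + ez m == d.-2)%N && ~~ I m.
Proof. by case: d => [|[|k]] //; rewrite /downs mem_sort mem_filter mem_monos andbC. Qed.

Lemma uniq_downs d I : uniq (downs d I).
Proof. by case: d => [|[|k]] //; rewrite /downs sort_uniq filter_uniq // uniq_monos. Qed.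

Lemma mem_Avs d I u : (u \in Avs d I) = (u \in labels d) && is_A I u.
Proof. by rewrite /Avs mem_sort mem_filter andbC. Qed.

Lemma mem_Evs d I u : (u \in Evs d I) = (u \in labels d) && is_E I u.
Proof. by rewrite /Evs mem_sort mem_filter andbC. Qed.

Lemma uniq_Avs d I : uniq (Avs d I).
Proof. by rewrite /Avs sort_uniq filter_uniq // uniq_labels. Qed.

Lemma uniq_Evs d I : uniq (Evs d I).
Proof. by rewrite /Evs sort_uniq filter_uniq // uniq_labels. Qed.

Lemma mem_shiftz_downs d I u :
  (u \in map shiftz (downs d I)) = (u \in labels d) && on_down I u.
Proof.
apply/mapP/idP.
- case=> [[[a b] c]]; rewrite mem_downs /ex /ey /ez /= => /andP[/andP[d_gt1 deg] Im] ->.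
  rewrite mem_labels /on_down /shiftz /ex /ey /ez /= Im andbT.
  by apply/andP; split; [lia | apply/eqP; lia].
- case: u => [[a b] c]; rewrite mem_labels /on_down /ex /ey /ez /=.
  case/andP=> /andP[d_gt0 deg] /andP[c_gt0 Im].
  exists (a, b, c.-1); last by rewrite /shiftz /= prednK.
  by rewrite mem_downs /ex /ey /ez /= Im andbT; apply/andP; split; lia.
Qed.

(* An upward triangle stands for the vertex of L(T) on its upper-left edge,
   a downward triangle [m] for the vertex [m*z] on its right edge; thus
   [row_verts] and [col_verts] both enumerate the vertices of L(T). *)
Definition verts d I := [seq u <- labels d | is_vert I u].
Definition row_verts d I := Evs d I ++ ups d I.
Definition col_verts d I := Avs d I ++ map shiftz (downs d I).

Lemma uniq_verts d I : uniq (verts d I).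
Proof. by rewrite filter_uniq // uniq_labels. Qed.

Lemma uniq_row_verts d I : uniq (row_verts d I).
Proof.
rewrite cat_uniq uniq_Evs uniq_ups /= andbT; apply/hasPn => u.
by rewrite mem_ups mem_Evs /is_E /on_up => /andP[_ ->]; rewrite andbF.
Qed.

Lemma uniq_col_verts d I : uniq (col_verts d I).
Proof.
rewrite cat_uniq uniq_Avs (map_inj_uniq shiftz_inj) uniq_downs /= andbT.
apply/hasPn => u; rewrite mem_shiftz_downs mem_Avs /is_A.
by case/andP=> _ ->; rewrite !andbF.
Qed.

Lemma perm_row_verts d I : perm_eq (row_verts d I) (verts d I).
Proof.
apply: uniq_perm (uniq_row_verts d I) (uniq_verts d I) _ => u.
rewrite mem_cat mem_Evs mem_ups mem_filter /is_E /is_vert /on_up.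
by case: (u \in labels d); case: (I u); case: (on_down I u).
Qed.

Lemma perm_col_verts d I : perm_eq (col_verts d I) (verts d I).
Proof.
apply: uniq_perm (uniq_col_verts d I) (uniq_verts d I) _ => u.
rewrite mem_cat mem_Avs mem_shiftz_downs mem_filter /is_A /is_vert /on_up.
by case: (u \in labels d); case: (I u); case: (on_down I u).
Qed.

Lemma size_Evs_Avs d I : size (ups d I) = size (downs d I) -> size (Evs d I) = size (Avs d I).
Proof.
move=> ud; have := perm_size (perm_row_verts d I).
by rewrite -(perm_size (perm_col_verts d I)) !size_cat size_map ud => /addIn.
Qed.

Definition z_increasing (G : rel mono) := forall x y, G x y -> ez y = (ez x).+1.

Lemma npathsS Wl G k u v : npaths Wl G k.+1 u v =
  ((u == v) + \sum_(w <- Wl) G u w * npaths Wl G k w v)%N.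
Proof. by []. Qed.

Lemma npaths_stable d G : z_increasing G -> forall k u v, (d <= ez u + k)%N ->
  npaths (labels d) G k.+1 u v = npaths (labels d) G k u v.
Proof.
move=> Gz; elim=> [|k IH] u v ezk.
  rewrite /= big1_seq ?addn0 // => w /andP[_ /labels_ez w_lt].
  by case Guw: (G u w); [move: (Gz _ _ Guw) w_lt ezk; lia | rewrite mul0n].
rewrite npathsS [in RHS]npathsS; congr (_ + _)%N; apply: eq_big_seq => w _.
case Guw: (G u w); last by rewrite !mul0n.
by rewrite IH //; move: (Gz _ _ Guw) ezk; lia.
Qed.

(* Paths in L(T) have fewer than [d] steps, so [npaths] at length [d]
   satisfies the first-step recursion. *)
Lemma npaths_rec d G : z_increasing G -> forall u v, npaths (labels d) G d u v =
  ((u == v) + \sum_(w <- labels d) G u w * npaths (labels d) G d w v)%N.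
Proof.
move=> Gz u v; case: d => [|d]; first by rewrite /labels big_nil addn0.
rewrite npathsS; congr (_ + _)%N; apply: eq_big_seq => w _.
case Guw: (G u w); last by rewrite !mul0n.
by rewrite npaths_stable //; move: (Gz _ _ Guw); lia.
Qed.

Lemma sum_npaths_le1 (Wl Es : seq mono) (G : rel mono) : uniq Es -> uniq Wl ->
  (forall u w1 w2, G u w1 -> G u w2 -> w1 = w2) ->
  (forall e w, e \in Es -> G e w = false) ->
  forall k u, (\sum_(e <- Es) npaths Wl G k u e <= 1)%N.
Proof.
move=> Es_uniq Wl_uniq G_fun Es_sink; elim=> [|k IH] u.
  by apply: (@sum_bool_le1 _ Es (fun e => u == e)) => // x y /eqP <- /eqP.
under eq_bigr do rewrite npathsS.
rewrite big_split /= exchange_big /=.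
have [uE|uNE] := boolP (u \in Es).
  rewrite [X in (_ + X)%N]big1_seq ?addn0; last first.
    by move=> w _; rewrite big1 // => e _; rewrite Es_sink.
  by apply: (@sum_bool_le1 _ Es (fun e => u == e)) => // x y /eqP <- /eqP.
rewrite [X in (X + _)%N]big1_seq ?add0n; last first.
  by move=> e /andP[_ eE]; apply/eqP; rewrite eqb0; apply: contra uNE => /eqP ->.
apply: (leq_trans _ (sum_bool_le1 Wl_uniq (G_fun u))).
apply: leq_sum => w _; rewrite -big_distrr /=.
by case: (G u w); rewrite ?mul1n ?mul0n.
Qed.

Local Open Scope ring_scope.

Lemma det_mx_perm_eq (R : comPzRingType) (T : eqType) N (x0 : T) (r c v : seq T) :
  perm_eq r v -> perm_eq c v -> uniq v -> size v = N ->
  exists e : R, forall F : T -> T -> R,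
    \det (\matrix_(i < N, j < N) F (nth x0 r i) (nth x0 c j)) =
    e * \det (\matrix_(i < N, j < N) F (nth x0 v i) (nth x0 v j)).
Proof.
move=> rv cv v_uniq vN.
have [p nth_p] := perm_eq_nth_perm x0 rv v_uniq vN.
have [q nth_q] := perm_eq_nth_perm x0 cv v_uniq vN.
exists (\det (perm_mx p) * \det (perm_mx q^-1%g)) => F.
set M := \matrix_(i, j) F (nth x0 v i) (nth x0 v j).
have -> : \matrix_(i, j) F (nth x0 r i) (nth x0 c j) = row_perm p (col_perm q M).
  by apply/matrixP => i j; rewrite !mxE nth_p nth_q.
by rewrite row_permE col_permE !det_mulmx mulrA [RHS]mulrAC.
Qed.

Lemma det_complementary_minor (R : comPzRingType) m n (A B : 'M[R]_(m + n)) :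
  A *m B = 1%:M -> \det A * \det (ulsubmx B) = \det (drsubmx A).
Proof.
rewrite -[A]submxK -[B]submxK mulmx_block scalar_mx_block.
case/eq_block_mx => ul_1 _ dl_0 _.
have : block_mx (ulsubmx A) (ursubmx A) (dlsubmx A) (drsubmx A) *m
         block_mx (ulsubmx B) 0 (dlsubmx B) 1%:M =
       block_mx 1%:M (ursubmx A) 0 (drsubmx A).
  by rewrite mulmx_block !mulmx0 !mulmx1 !add0r ul_1 dl_0.
move/(congr1 determinant); rewrite det_mulmx det_lblock det_ublock !det1 mulr1 mul1r.
by rewrite !block_mxKul !block_mxKdr.
Qed.

Lemma normr_det_unimodular k (A B : 'M[int]_k) : A *m B = 1%:M -> `|\det A| = 1.
Proof.
move/(congr1 determinant); rewrite det_mulmx det1 mulrC => /intUnitRing.unitzPl.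
by rewrite qualifE => /orP[] /eqP ->; rewrite ?normrN normr1.
Qed.

Lemma row_sum_le1_perm_mx (R : comPzRingType) k (f : 'I_k -> 'I_k -> nat) :
  (forall i, (\sum_j f i j <= 1)%N) ->
  \det (\matrix_(i, j) (f i j)%:R : 'M[R]_k) != 0 ->
  exists s : 'S_k, \matrix_(i, j) (f i j)%:R = perm_mx s :> 'M[R]_k.
Proof.
set M := \matrix_(i, j) _ => row_le1 detM.
have row_nz i : exists j, f i j != 0%N.
  apply/existsP; apply: contraR detM; rewrite negb_exists => /forallP row0.
  apply/eqP; rewrite (expand_det_row _ i) big1 // => j _.
  by rewrite mxE; move: (row0 j); rewrite negbK => /eqP ->; rewrite mul0r.
have [g g_nz] := fin_all_exists row_nz.
have f_g i j : f i j = (g i == j).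
  have := row_le1 i; rewrite (bigD1 (g i)) //=.
  have : (0 < f i (g i))%N by rewrite lt0n g_nz.
  case: eqP => [<-|/eqP ne]; first by lia.
  by rewrite (bigD1 j) 1?eq_sym //=; lia.
have g_inj : injective g.
  move=> i1 i2 g12; apply/eqP; apply: contraR detM => ne.
  by apply/eqP; apply: (determinant_alternate ne) => j; rewrite !mxE !f_g g12.
by exists (perm g_inj); apply/matrixP => i j; rewrite !mxE f_g permE.
Qed.

Lemma sign_sqr k : (-1) ^+ k * (-1) ^+ k = 1 :> int.
Proof. by rewrite -exprD addnn -mul2n exprM sqrrN !expr1n. Qed.

Lemma shiftz_sub_adj_xy m u :
  ((u == shiftz m)%:R - (adj_xy m u)%:R : int) =
  (-1) ^+ ez u * (-1) ^+ (ez m).+1 * (adj m u)%:R.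
Proof.
rewrite adj_xy_shiftz; have [->|_] := eqVneq u (shiftz m).
  have -> : adj_xy m (shiftz m) = false.
    by apply/negbTE/negP => /adj_xy_ez /=; lia.
  by rewrite orbT subr0 mulr1 sign_sqr.
rewrite orbF sub0r; case xy: (adj_xy m u); last by rewrite mulr0 oppr0.
by rewrite (adj_xy_ez xy) mulr1 exprS mulrCA sign_sqr mulr1.
Qed.

Definition step_entry (G : rel mono) (x y : mono) : int := (x == y)%:R - (G x y)%:R.
Definition pathcount d (G : rel mono) (x y : mono) : int := (npaths (labels d) G d x y)%:R.

Definition stepmx d I n G : 'M[int]_(size (Avs d I) + n) :=
  \matrix_(i, j) step_entry G (nth mono0 (row_verts d I) i) (nth mono0 (col_verts d I) j).
Definition pathmx d I n G : 'M[int]_(size (Avs d I) + n) :=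
  \matrix_(i, j) pathcount d G (nth mono0 (col_verts d I) i) (nth mono0 (row_verts d I) j).

Definition lattice_rel I (G : rel mono) :=
  z_increasing G /\ forall x y, G x y -> is_vert I y.

Definition sorted_verts d I := sort revlex_le (verts d I).

Definition diag_sign d I n : int :=
  (\prod_(i < n) (-1) ^+ ez (W d I i)) * \prod_(i < n) (-1) ^+ (ez (B d I i)).+1.

Lemma step_entry_diag G x : z_increasing G -> step_entry G x x = 1.
Proof.
move=> Gz; rewrite /step_entry eqxx; case Gxx: (G x x); last by rewrite subr0.
by move: (Gz _ _ Gxx); lia.
Qed.

(* Steps of [G] raise the z-exponent, so [1 - G] is unitriangular in
   reverse-lex order. *)
Lemma det_step_sorted_verts d I G N : z_increasing G -> size (sorted_verts d I) = N ->
  \det (\matrix_(p < N, q < N)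
    step_entry G (nth mono0 (sorted_verts d I) p) (nth mono0 (sorted_verts d I) q)) = 1.
Proof.
move=> Gz vsN; rewrite det_trig; last first.
  apply/is_trig_mxP => p q pq; rewrite mxE /step_entry.
  have q_lt : (q < size (sorted_verts d I))%N by rewrite vsN.
  have p_lt : (p < size (sorted_verts d I))%N by rewrite vsN.
  rewrite nth_uniq ?sort_uniq ?uniq_verts // (ltn_eqF pq).
  case G_pq: (G _ _); last by rewrite subrr.
  have := sorted_revlex_ez (s := sorted_verts d I)
            (sort_sorted revlex_le_total (verts d I)) (ltnW pq) q_lt.
  by rewrite (Gz _ _ G_pq) ltnn.
by rewrite big1 // => p _; rewrite mxE step_entry_diag.
Qed.

Lemma lattice_rel_lstep I : lattice_rel I (lstep I).
Proof.
split=> [[[a b] c] [[a' b'] c']|x y /and3P[] //].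
rewrite /lstep /geo_step /ex /ey /ez /= => /and3P[_ _].
by case/orP => /andP[_ /eqP [_ _ ->]].
Qed.

Lemma normr_diag_sign d I n : `|diag_sign d I n| = 1.
Proof. by rewrite normrM !normr_prod !big1 ?mulr1 // => i _; exact: normr_sign. Qed.

Section Balanced.

Variables (d : nat) (I : pred mono) (n : nat).
Hypotheses (downs_n : size (downs d I) = n) (ups_n : size (ups d I) = n).

Lemma size_Evs : size (Evs d I) = size (Avs d I).
Proof. by rewrite size_Evs_Avs // ups_n downs_n. Qed.

Lemma size_row_verts : size (row_verts d I) = (size (Avs d I) + n)%N.
Proof. by rewrite size_cat ups_n size_Evs. Qed.

Lemma size_col_verts : size (col_verts d I) = (size (Avs d I) + n)%N.
Proof. by rewrite size_cat size_map downs_n. Qed.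

Lemma nth_row_verts_l (i : 'I_(size (Avs d I))) :
  nth mono0 (row_verts d I) (lshift n i) = Ev d I i.
Proof. by rewrite nth_cat /= size_Evs ltn_ord. Qed.

Lemma nth_col_verts_l (i : 'I_(size (Avs d I))) :
  nth mono0 (col_verts d I) (lshift n i) = Av d I i.
Proof. by rewrite nth_cat /= ltn_ord. Qed.

Lemma nth_row_verts_r (i : 'I_n) :
  nth mono0 (row_verts d I) (rshift (size (Avs d I)) i) = W d I i.
Proof. by rewrite nth_cat /= size_Evs ltnNge leq_addr /= addKn. Qed.

Lemma nth_col_verts_r (i : 'I_n) :
  nth mono0 (col_verts d I) (rshift (size (Avs d I)) i) = shiftz (B d I i).
Proof. by rewrite nth_cat /= ltnNge leq_addr /= addKn (nth_map mono0) ?downs_n. Qed.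

Lemma B_notin (i : 'I_n) : ~~ I (B d I i).
Proof.
have : B d I i \in downs d I by rewrite mem_nth ?downs_n.
by rewrite mem_downs => /andP[].
Qed.

Lemma W_notin (i : 'I_n) : ~~ I (W d I i).
Proof.
have : W d I i \in ups d I by rewrite mem_nth ?ups_n.
by rewrite mem_ups => /andP[].
Qed.

Lemma B_inj (i j : 'I_n) : B d I i = B d I j -> i = j.
Proof. by move/eqP; rewrite nth_uniq ?downs_n ?uniq_downs // => /eqP /val_inj. Qed.

Lemma W_inj (i j : 'I_n) : W d I i = W d I j -> i = j.
Proof. by move/eqP; rewrite nth_uniq ?ups_n ?uniq_ups // => /eqP /val_inj. Qed.

Lemma stepmx_pathmx G : lattice_rel I G -> stepmx d I n G *m pathmx d I n G = 1%:M.
Proof.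
move=> [Gz G_vert]; apply/matrixP => i j; rewrite !mxE.
set x := nth mono0 (row_verts d I) i; set y := nth mono0 (row_verts d I) j.
have -> : \sum_k stepmx d I n G i k * pathmx d I n G k j =
          \sum_(w <- col_verts d I) step_entry G x w * pathcount d G w y.
  rewrite (big_nth mono0) size_col_verts big_mkord; apply: eq_bigr => k _.
  by rewrite !mxE.
have x_vert : x \in verts d I.
  by rewrite -(perm_mem (perm_row_verts d I)) mem_nth ?size_row_verts.
rewrite (perm_big _ (perm_col_verts d I)) /=.
under eq_bigr do rewrite /step_entry mulrBl.
rewrite sumrB (bigD1_seq x) ?uniq_verts //= eqxx mul1r big1 ?addr0; last first.
  by move=> w; rewrite eq_sym => /negbTE ->; rewrite mul0r.
have -> : \sum_(w <- verts d I) (G x w)%:R * pathcount d G w y =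
          \sum_(w <- labels d) (G x w)%:R * pathcount d G w y.
  rewrite big_filter big_mkcond /=; apply: eq_bigr => w _.
  by case Gxw: (G x w); [rewrite (G_vert _ _ Gxw) | rewrite mul0r if_same].
rewrite /pathcount npaths_rec // natrD natr_sum.
under eq_bigr do rewrite natrM.
rewrite addrK /x /y nth_uniq ?size_row_verts ?uniq_row_verts //.
Qed.

Lemma normr_det_stepmx G : lattice_rel I G -> `|\det (stepmx d I n G)| = 1.
Proof. by move/stepmx_pathmx/normr_det_unimodular. Qed.

Lemma det_stepmx_indep G1 G2 : z_increasing G1 -> z_increasing G2 ->
  \det (stepmx d I n G1) = \det (stepmx d I n G2).
Proof.
move=> G1z G2z.
have sorted_N : size (sorted_verts d I) = (size (Avs d I) + n)%N.
  by rewrite size_sort -(perm_size (perm_col_verts d I)) size_col_verts.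
have to_sorted s : perm_eq s (verts d I) -> perm_eq s (sorted_verts d I).
  by move=> sv; rewrite perm_sym /sorted_verts perm_sort perm_sym.
have [e He] := det_mx_perm_eq int mono0 (to_sorted _ (perm_row_verts d I))
  (to_sorted _ (perm_col_verts d I)) (etrans (sort_uniq _ _) (uniq_verts d I)) sorted_N.
by rewrite /stepmx (He (step_entry G1)) (He (step_entry G2)) !det_step_sorted_verts.
Qed.

Lemma ulsubmx_pathmx G : ulsubmx (pathmx d I n G) =
  \matrix_(i, j) (npaths (labels d) G d (Av d I i) (Ev d I j))%:R.
Proof. by apply/matrixP => i j; rewrite !mxE nth_col_verts_l nth_row_verts_l. Qed.

Lemma ulsubmx_pathmx_lstep : ulsubmx (pathmx d I n (lstep I)) = Nmat d I.
Proof. by rewrite ulsubmx_pathmx; apply/matrixP => i j; rewrite !mxE natz. Qed.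

Lemma drsubmx_stepmx_lstep : drsubmx (stepmx d I n (lstep I)) =
  diag_mx (\row_i (-1) ^+ ez (W d I i)) *m (Zmat d I n)^T *m
  diag_mx (\row_j (-1) ^+ (ez (B d I j)).+1).
Proof.
apply/matrixP => i j; rewrite mul_mx_diag mul_diag_mx !mxE.
rewrite nth_row_verts_r nth_col_verts_r /step_entry lstep_shiftz ?W_notin ?B_notin //.
by rewrite shiftz_sub_adj_xy mulrAC.
Qed.

Lemma normr_det_Zmat_Nmat : `|\det (Zmat d I n)| = `|\det (Nmat d I)|.
Proof.
have := det_complementary_minor (stepmx_pathmx (lattice_rel_lstep I)).
rewrite ulsubmx_pathmx_lstep drsubmx_stepmx_lstep => /(congr1 Num.norm).
rewrite normrM normr_det_stepmx ?mul1r => [->|]; last exact: lattice_rel_lstep.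
rewrite !det_mulmx !det_diag det_tr !normrM !normr_prod !big1 ?mul1r ?mulr1 //.
  by move=> j _; rewrite mxE normr_sign.
by move=> i _; rewrite mxE normr_sign.
Qed.

Section Tiling.

Variable pi : 'S_n.

Lemma matched_B (j : 'I_n) u : matched d I pi (B d I j) u = (W d I (pi j) == u).
Proof.
apply/existsP/eqP => [[i /andP[/eqP /B_inj -> /eqP //]]|<-].
by exists j; rewrite !eqxx.
Qed.

Lemma matched_notin m u : matched d I pi m u -> ~~ I m.
Proof. by case/existsP=> i /andP[/eqP <- _]; exact: B_notin. Qed.

Lemma matched_inj m1 m2 u : matched d I pi m1 u -> matched d I pi m2 u -> m1 = m2.
Proof.
move=> /existsP[i /andP[/eqP <- /eqP Wi]] /existsP[j /andP[/eqP <- /eqP Wj]].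
by move: Wj; rewrite -Wi => /W_inj /perm_inj ->.
Qed.

Lemma tstep_shiftz u m : tstep d I pi u (shiftz m) = adj_xy m u && matched d I pi m u.
Proof.
rewrite /tstep /adj_xy -step_y_shiftz -step_x_shiftz orbC andb_orl.
congr (_ || _).
  case: eqP => [e|_]; last by rewrite !andbF.
  have m_eq : m = ((ex u).-1, ey u, ez u) by apply: shiftz_inj; rewrite e.
  by rewrite m_eq !andbT.
case: eqP => [e|_]; last by rewrite !andbF.
have m_eq : m = (ex u, (ey u).-1, ez u) by apply: shiftz_inj; rewrite e.
by rewrite m_eq !andbT.
Qed.

Lemma lattice_rel_tstep : lattice_rel I (tstep d I pi).
Proof.
split=> [[[a b] c] [[a' b'] c']|u v].
  by rewrite /tstep /ex /ey /ez /=; case/orP => /andP[_ /eqP [_ _ ->]].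
by case/orP => /andP[/andP[_ /matched_notin Im] /eqP ->]; exact: is_vert_shiftz Im.
Qed.

Lemma tstep_functional u w1 w2 : tstep d I pi u w1 -> tstep d I pi u w2 -> w1 = w2.
Proof.
case: u => [[a b] c]; rewrite /tstep /ex /ey /ez /=.
case/orP => /andP[/andP[lt1 m1] /eqP ->]; case/orP => /andP[/andP[lt2 m2] /eqP ->] //;
  by have := matched_inj m1 m2 => -[]; lia.
Qed.

Lemma tstep_from_Evs e w : e \in Evs d I -> tstep d I pi e w = false.
Proof.
rewrite mem_Evs /is_E /on_up => /andP[_ /andP[/negPn Ie _]].
apply/negbTE/negP; case/orP => /andP[/andP[_ /existsP[i /andP[_ /eqP We]]] _];
  by move: (W_notin (pi i)); rewrite We Ie.
Qed.

Hypothesis tiling : is_tiling d I pi.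

(* Permuting the columns by [pi^-1] puts each lozenge on the diagonal; the
   entries above it vanish because [ups] is sorted by decreasing z-exponent. *)
Lemma det_drsubmx_tstep :
  \det (drsubmx (stepmx d I n (tstep d I pi))) * psign pi = diag_sign d I n.
Proof.
set D := col_perm pi^-1%g (drsubmx (stepmx d I n (tstep d I pi))).
have D_entry (a b : 'I_n) : D a b =
    (W d I a == shiftz (B d I (pi^-1%g b)))%:R -
    (adj_xy (B d I (pi^-1%g b)) (W d I a) && (W d I b == W d I a))%:R.
  by rewrite !mxE nth_row_verts_r nth_col_verts_r /step_entry tstep_shiftz matched_B permKV.
have adj_W (a : 'I_n) : adj (B d I (pi^-1%g a)) (W d I a).
  by have := tiling (pi^-1%g a); rewrite permKV.
have -> : \det (drsubmx (stepmx d I n (tstep d I pi))) * psign pi = \det D.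
  by rewrite /D col_permE det_mulmx det_perm invgK.
rewrite -det_tr det_trig; last first.
  apply/is_trig_mxP => i j ij; rewrite mxE D_entry.
  have W_ij : (W d I i == W d I j) = false.
    by apply/negbTE/eqP => /W_inj eij; move: ij; rewrite eij ltnn.
  rewrite W_ij andbF subr0; case: eqP => // W_j.
  have ez_Wi : ez (W d I i) = ez (B d I (pi^-1%g i)).
    by have := adj_W i; rewrite adj_xy_shiftz -W_j W_ij orbF => /adj_xy_ez.
  have := sorted_revlex_ez (sorted_ups d I) (ltnW ij) (_ : (j < size (ups d I))%N).
  by rewrite -/(W d I i) -/(W d I j) W_j ez_Wi /= ltnn ups_n => /(_ (ltn_ord j)).
under eq_bigr do rewrite mxE D_entry eqxx andbT shiftz_sub_adj_xy adj_W mulr1.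
rewrite big_split /=; congr (_ * _).
by rewrite [RHS](reindex_inj (@perm_inj _ pi^-1%g)).
Qed.

Lemma det_ulsubmx_pathmx_tstep :
  \det (stepmx d I n (lstep I)) * \det (ulsubmx (pathmx d I n (tstep d I pi))) * psign pi =
  diag_sign d I n.
Proof.
rewrite (det_stepmx_indep (lattice_rel_lstep I).1 lattice_rel_tstep.1).
by rewrite (det_complementary_minor (stepmx_pathmx lattice_rel_tstep)) det_drsubmx_tstep.
Qed.

(* The paths of a tiling are disjoint and the E-vertices are sinks, so each
   A-vertex reaches at most one E-vertex. *)
Lemma ulsubmx_pathmx_tstep_perm :
  exists s, ulsubmx (pathmx d I n (tstep d I pi)) = perm_mx s.
Proof.
have det_nz : \det (ulsubmx (pathmx d I n (tstep d I pi))) != 0.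
  apply/eqP => det0; have := normr_diag_sign d I n.
  by rewrite -det_ulsubmx_pathmx_tstep det0 mulr0 mul0r normr0.
rewrite ulsubmx_pathmx in det_nz *; apply: row_sum_le1_perm_mx det_nz => i.
have := sum_npaths_le1 (uniq_Evs d I) (uniq_labels d) tstep_functional tstep_from_Evs d (Av d I i).
by rewrite (big_nth mono0) size_Evs big_mkord.
Qed.

Lemma sgn_lp_perm s : ulsubmx (pathmx d I n (tstep d I pi)) = perm_mx s ->
  sgn_lp d I pi = psign s.
Proof.
move=> pathmx_s.
have reach (i j : 'I_(size (Avs d I))) : treach d I pi (Av d I i) (Ev d I j) = (s i == j).
  have := congr1 (fun M : 'M_(size (Avs d I)) => M i j) pathmx_s.
  rewrite ulsubmx_pathmx !mxE.
  by move/eqP; rewrite eqr_nat /treach => /eqP ->; case: (s i == j).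
rewrite /sgn_lp; case: pickP => [s' /forallP s'_reach|/(_ s) /negP []].
  by congr psign; apply/permP => i; apply/eqP; rewrite eq_sym -reach s'_reach.
by apply/forallP => i; rewrite reach.
Qed.

Lemma sgn_pm_lp_tiling :
  sgn_pm d I pi * sgn_lp d I pi = \det (stepmx d I n (lstep I)) * diag_sign d I n.
Proof.
have [s pathmx_s] := ulsubmx_pathmx_tstep_perm.
have det_sqr : \det (stepmx d I n (lstep I)) * \det (stepmx d I n (lstep I)) = 1.
  by rewrite -expr2 -real_normK ?num_real // normr_det_stepmx ?expr1n; last exact: lattice_rel_lstep.
rewrite -det_ulsubmx_pathmx_tstep pathmx_s det_perm /sgn_pm (sgn_lp_perm pathmx_s).
by rewrite !mulrA det_sqr mul1r mulrC.
Qed.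

End Tiling.
End Balanced.

Unset Implicit Arguments.

Theorem theorem4p6 (d : nat) (I : pred mono) (n : nat) :
  monomial_ideal I ->
  size (downs d I) = n -> size (ups d I) = n ->
  (forall pi pi' : 'S_n, is_tiling d I pi -> is_tiling d I pi' ->
     sgn_pm d I pi * sgn_lp d I pi = sgn_pm d I pi' * sgn_lp d I pi') /\
  `|\det (Zmat d I n)| = `|\det (Nmat d I)|.
Proof.
(* The argument never uses that [I] is an ideal. *)
move=> _ downs_n ups_n; split; last exact: normr_det_Zmat_Nmat.
move=> pi pi' tiling tiling'.
by rewrite (sgn_pm_lp_tiling downs_n ups_n tiling) (sgn_pm_lp_tiling downs_n ups_n tiling').
Qed.
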